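(* Let $R$ be a finite commutative principal ideal ring with unity. Suppose that $R$ has exactly two associated prime ideals $p_1,p_2$ (i.e. $\lvert \operatorname{Ass}(R)\rvert=2$) and that $p_1\cap p_2=\{0\}$. Then the complement $\overline{\Gamma(R)}$ of the zero divisor graph of $R$ is a divisor graph.
   Context: $\operatorname{Ass}(R)$ is the set of associated primes of $R$ as an $R$-module, i.e. prime ideals of $R$ of the form $\operatorname{ann}(x)$ for some nonzero $x\in R$. The zero divisor graph $\Gamma(R)$ has vertex set the nonzero zero divisors of $R$, distinct $a,b$ adjacent iff $ab=0$; its complement $\overline{\Gamma(R)}$ has the same vertex set with distinct $a,b$ adjacent iff $ab\neq 0$. For a nonempty set $T$ of positive integers, the divisor graph $G(T)$ has vertex set $T$, with distinct $i,j$ adjacent iff $i\mid j$ or $j\mid i$; a graph is a divisor graph if it is isomorphic to some $G(T)$. *)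

From mathcomp Require Import all_boot all_order all_algebra.
Set Implicit Arguments.
Unset Strict Implicit.
Unset Printing Implicit Defensive.
Import GRing.Theory.
Local Open Scope ring_scope.

Definition is_ideal (R : finComNzRingType) (I : {set R}) : bool :=
  [&& (0 : R) \in I,
      [forall x, forall y, (x \in I) ==> (y \in I) ==> (x + y \in I)] &
      [forall r, forall x, (x \in I) ==> (r * x \in I)]].

Definition principal_ideal (R : finComNzRingType) (a : R) : {set R} :=
  [set r * a | r : R].

Definition is_PIR (R : finComNzRingType) : Prop :=
  forall I : {set R}, is_ideal I -> exists a : R, I = principal_ideal a.

Definition is_prime_ideal (R : finComNzRingType) (P : {set R}) : bool :=
  [&& is_ideal P, (1 : R) \notin P &
      [forall a, forall b, (a * b \in P) ==> (a \in P) || (b \in P)]].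

Definition ann (R : finComNzRingType) (x : R) : {set R} :=
  [set y : R | x * y == 0].

Definition Ass (R : finComNzRingType) : {set {set R}} :=
  [set P : {set R} | is_prime_ideal P && [exists x : R, (x != 0) && (P == ann x)]].

Definition zdiv_vertices (R : finComNzRingType) : {set R} :=
  [set a : R | (a != 0) && [exists b : R, (b != 0) && (a * b == 0)]].

(* Adjacency of the complement of the zero-divisor graph (on distinct vertices). *)
Definition compl_zdiv_adj (R : finComNzRingType) : rel R :=
  fun a b => a * b != 0.

(* A graph with vertex set V (nonempty, as in G(T) with T nonempty) and
   adjacency relation adj (considered on distinct vertices) is a divisor graph
   iff it is isomorphic to G(T) for some nonempty set T of positive integers,
   i.e. there is an injection f : V -> positive integers such that distinct
   u, v are adjacent iff f u | f v or f v | f u. *)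
Definition is_divisor_graph (T : finType) (V : {set T}) (adj : rel T) : Prop :=
  V != set0 /\
  exists f : T -> nat,
    {in V &, injective f} /\
    {in V, forall v, (0 < f v)%N} /\
    {in V &, forall u v, u != v -> adj u v = (f u %| f v)%N || (f v %| f u)%N}.

From mathcomp Require Import all_boot all_order all_algebra.
Import GRing.Theory.
Set Implicit Arguments.
Unset Strict Implicit.
Unset Printing Implicit Defensive.
Local Open Scope ring_scope.

(* A nonzero zero divisor a, say a b = 0 with b <> 0, lies in an associated
   prime: among the nonzero multiples c of b, one with ann c of maximal size
   has a prime annihilator, and ann b is contained in it.  With Ass R = {P, Q}
   and P :&: Q = 0 we get P Q = 0, while two nonzero a, c in P cannot satisfy
   a c = 0: then a lies in an associated prime ann (x c), and ann (x c) = P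
   would give x c Q = 0, i.e. Q = 0, whereas ann (x c) = Q would put a in
   P :&: Q.  So the complement of the zero divisor graph is a disjoint union
   of two cliques, which is a divisor graph. *)

Lemma dvdn_prime_exp (p q i j : nat) : prime p -> prime q ->
  (p ^ i.+1 %| q ^ j.+1)%N = (p == q) && (i <= j)%N.
Proof.
move=> p_pr q_pr; have [<-|neq_pq] := eqVneq p q.
  by rewrite dvdn_Pexp2l ?prime_gt1.
apply/negP => /(dvdn_trans (dvdn_exp _ (dvdnn p)))-/(_ isT).
by rewrite Euclid_dvdX // andbT dvdn_prime2 // (negbTE neq_pq).
Qed.

Section TwoCliques.
Variables (T : finType) (side : pred T).

Definition clique_label (v : T) : nat :=
  ((if side v then 2 else 3) ^ (enum_rank v).+1)%N.

Lemma clique_label_gt0 v : (0 < clique_label v)%N.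
Proof. by rewrite expn_gt0; case: (side v). Qed.

Lemma dvdn_clique_label u v :
  (clique_label u %| clique_label v)%N =
  (side u == side v) && (enum_rank u <= enum_rank v)%N.
Proof. by rewrite dvdn_prime_exp; case: (side u); case: (side v). Qed.

Lemma clique_label_inj : injective clique_label.
Proof.
move=> u v eq_uv.
have := dvdn_clique_label u v; have := dvdn_clique_label v u.
rewrite eq_uv dvdnn => /esym/andP[_ le_vu] /esym/andP[_ le_uv].
by apply/enum_rank_inj/val_inj/anti_leq; rewrite le_uv le_vu.
Qed.

Lemma divisor_graph_two_cliques (V : {set T}) (adj : rel T) :
  V != set0 ->
  {in V &, forall u v, u != v -> adj u v = (side u == side v)} ->
  is_divisor_graph V adj.
Proof.
move=> V_neq0 adjE; split=> //; exists clique_label; split; last split.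
- by move=> u v _ _; apply: clique_label_inj.
- by move=> v _; apply: clique_label_gt0.
- move=> u v uV vV neq_uv; rewrite adjE // !dvdn_clique_label [side v == _]eq_sym.
  by rewrite -andb_orr leq_total andbT.
Qed.

End TwoCliques.

Section Annihilators.
Variable R : finComNzRingType.
Implicit Types (a b c x y : R) (P Q : {set R}).

Lemma AssP P :
  reflect (is_prime_ideal P /\ exists2 x, x != 0 & P = ann x) (P \in Ass R).
Proof.
rewrite inE; apply: (iffP andP) => [[P_pr /existsP[x /andP[x_neq0 /eqP PE]]]|].
  by split; last exists x.
by case=> P_pr [x x_neq0 PE]; split=> //; apply/existsP; exists x; rewrite x_neq0 PE /=.
Qed.

Lemma in_ann x y : (y \in ann x) = (x * y == 0).
Proof. by rewrite inE. Qed.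

Lemma ann_ideal x : is_ideal (ann x).
Proof.
apply/and3P; split; first by rewrite in_ann mulr0.
  apply/forallP=> y; apply/forallP=> z; rewrite !in_ann.
  by apply/implyP=> /eqP xy0; apply/implyP=> /eqP xz0; rewrite mulrDr xy0 xz0 addr0.
apply/forallP=> r; apply/forallP=> y; rewrite !in_ann.
by apply/implyP=> /eqP xy0; rewrite mulrCA xy0 mulr0.
Qed.

Lemma ann_mull x c : ann c \subset ann (x * c).
Proof. by apply/subsetP=> y; rewrite !in_ann -mulrA => /eqP->; rewrite mulr0. Qed.

Lemma ann_max_prime c :
  c != 0 -> (forall x, x * c != 0 -> (#|ann (x * c)%R| <= #|ann c|)%N) ->
  is_prime_ideal (ann c).
Proof.
move=> c_neq0 c_max; apply/and3P; split; first exact: ann_ideal.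
  by rewrite in_ann mulr1.
apply/forallP=> a; apply/forallP=> b; apply/implyP; rewrite !in_ann => /eqP cab0.
have [//|ca_neq0] /= := eqVneq (c * a) 0.
have ac_neq0 : a * c != 0 by rewrite mulrC.
have /eqP annE : ann c == ann (a * c) by rewrite eqEcard ann_mull c_max.
by rewrite -in_ann annE in_ann -mulrA mulrCA cab0.
Qed.

Lemma exists_Ass_ann_mul b : b != 0 ->
  exists x, ann b \subset ann (x * b) /\ ann (x * b) \in Ass R.
Proof.
move=> b_neq0.
have one_b : 1 * b != 0 by rewrite mul1r.
case: (@arg_maxnP _ 1 (fun x => x * b != 0) (fun x => #|ann (x * b)|) one_b) => x xb_neq0 x_max.
exists x; split; first by have := ann_mull x (1 * b); rewrite !mul1r.
apply/AssP; split; last by exists (x * b).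
by apply: ann_max_prime => // y; rewrite mulrA => /x_max; rewrite -mulrA.
Qed.

Lemma zdiv_in_Ass a b : b != 0 -> a * b = 0 -> exists2 P, P \in Ass R & a \in P.
Proof.
move=> b_neq0 ab0; have [x [ann_sub ann_Ass]] := exists_Ass_ann_mul b_neq0.
by exists (ann (x * b)) => //; apply: (subsetP ann_sub); rewrite in_ann mulrC ab0.
Qed.

Lemma Ass_ideal P : P \in Ass R -> is_ideal P.
Proof. by case/AssP=> /and3P[]. Qed.

Lemma ideal_mull P r x : is_ideal P -> x \in P -> r * x \in P.
Proof. by case/and3P=> _ _ /forallP/(_ r)/forallP/(_ x)/implyP; apply. Qed.

Lemma ideal_mul_eq0 P Q a b : is_ideal P -> is_ideal Q -> P :&: Q = [set 0] ->
  a \in P -> b \in Q -> a * b = 0.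
Proof.
move=> P_id Q_id capPQ aP bQ; apply/set1P; rewrite -capPQ inE.
by rewrite mulrC ideal_mull // mulrC ideal_mull.
Qed.

Lemma Ass_eq_set0 Q : [set 0] \in Ass R -> Q \in Ass R -> Q = [set 0].
Proof.
case/AssP=> /and3P[_ _ dom] _ /AssP[_ [x x_neq0 ->]].
apply/setP=> y; rewrite in_ann inE; apply/idP/idP => [/eqP xy0|/eqP->]; last by rewrite mulr0.
move: dom => /forallP/(_ x)/forallP/(_ y)/implyP.
by rewrite xy0 set11 !inE (negbTE x_neq0) => /(_ isT).
Qed.

Lemma Ass_neq0 P Q : P \in Ass R -> Q \in Ass R -> P != Q ->
  exists2 a, a \in P & a != 0.
Proof.
move=> P_Ass Q_Ass neq_PQ; apply/exists_inP; apply: contraNT neq_PQ.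
move=> /exists_inPn P0; have PE : P = [set 0].
  apply/eqP; rewrite eqEsubset; apply/andP; split.
    by apply/subsetP=> y /P0; rewrite negbK inE.
  by rewrite sub1set; case/and3P: (Ass_ideal P_Ass).
by rewrite PE (Ass_eq_set0 _ Q_Ass) // -PE.
Qed.

Lemma zdiv_vertices_neq0 P Q : P \in Ass R -> Q \in Ass R -> P != Q ->
  zdiv_vertices R != set0.
Proof.
move=> P_Ass Q_Ass neq_PQ; have [a aP a_neq0] := Ass_neq0 P_Ass Q_Ass neq_PQ.
case/AssP: P_Ass => _ [x x_neq0 PE].
apply/set0Pn; exists a; rewrite inE a_neq0 /=; apply/existsP; exists x.
by rewrite x_neq0 mulrC -in_ann -PE.
Qed.

Lemma Ass_pair_mul_neq0 P Q a c :
  Ass R = [set P; Q] -> P != Q -> P :&: Q = [set 0] ->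
  a \in P -> c \in P -> a != 0 -> c != 0 -> a * c != 0.
Proof.
move=> AssE neq_PQ capPQ aP cP a_neq0 c_neq0; apply/eqP => ac0.
have [P_Ass Q_Ass] : P \in Ass R /\ Q \in Ass R by rewrite AssE set21 set22.
have [x [ann_sub]] := exists_Ass_ann_mul c_neq0.
have a_ann : a \in ann (x * c) by apply: (subsetP ann_sub); rewrite in_ann mulrC ac0.
rewrite AssE !inE => /orP[] /eqP annE.
- have neq_QP : Q != P by rewrite eq_sym.
  have [q qQ q_neq0] := Ass_neq0 Q_Ass P_Ass neq_QP.
  have xcP : x * c \in P by apply: ideal_mull cP; apply: Ass_ideal.
  have xcq0 := ideal_mul_eq0 (Ass_ideal P_Ass) (Ass_ideal Q_Ass) capPQ xcP qQ.
  have : q \in P :&: Q by rewrite inE qQ -annE in_ann xcq0 eqxx.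
  by rewrite capPQ inE (negbTE q_neq0).
- have : a \in P :&: Q by rewrite inE aP -annE a_ann.
  by rewrite capPQ inE (negbTE a_neq0).
Qed.

Lemma zdiv_vertices_mul_neq0 P Q u v :
  Ass R = [set P; Q] -> P != Q -> P :&: Q = [set 0] ->
  u \in zdiv_vertices R -> v \in zdiv_vertices R ->
  (u * v != 0) = ((u \in P) == (v \in P)).
Proof.
move=> AssE neq_PQ capPQ.
have [P_Ass Q_Ass] : P \in Ass R /\ Q \in Ass R by rewrite AssE set21 set22.
have [P_id Q_id] := conj (Ass_ideal P_Ass) (Ass_ideal Q_Ass).
have vertexP w : w \in zdiv_vertices R -> w != 0 /\ (w \notin P -> w \in Q).
  rewrite inE => /andP[-> /existsP[b /andP[b_neq0 /eqP wb0]]]; split=> // wNP.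
  have [P' + wP'] := zdiv_in_Ass b_neq0 wb0.
  by rewrite AssE !inE => /orP[]/eqP P'E; move: wP'; rewrite P'E // (negbTE wNP).
move=> /vertexP[u_neq0 uQ] /vertexP[v_neq0 vQ].
have AssE' : Ass R = [set Q; P] by rewrite AssE setUC.
have neq_QP : Q != P by rewrite eq_sym.
have capQP : Q :&: P = [set 0] by rewrite setIC.
case uP: (u \in P); case vP: (v \in P).
- by rewrite (Ass_pair_mul_neq0 AssE neq_PQ capPQ uP vP u_neq0 v_neq0).
- by rewrite (ideal_mul_eq0 P_id Q_id capPQ uP (vQ (negbT vP))) eqxx.
- by rewrite (ideal_mul_eq0 Q_id P_id capQP (uQ (negbT uP)) vP) eqxx.
- by rewrite (Ass_pair_mul_neq0 AssE' neq_QP capQP (uQ (negbT uP)) (vQ (negbT vP)) u_neq0 v_neq0).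
Qed.

End Annihilators.

Theorem theorem2p8 (R : finComNzRingType) :
  is_PIR R ->
  #|Ass R| = 2%N ->
  (forall p1 p2 : {set R}, p1 \in Ass R -> p2 \in Ass R -> p1 != p2 ->
     p1 :&: p2 = [set 0]) ->
  is_divisor_graph (zdiv_vertices R) (@compl_zdiv_adj R).
Proof.
move=> _ /eqP/cards2P[P [Q [neq_PQ AssE]]] capAss.
have [P_Ass Q_Ass] : P \in Ass R /\ Q \in Ass R by rewrite AssE set21 set22.
have capPQ := capAss _ _ P_Ass Q_Ass neq_PQ.
apply: (divisor_graph_two_cliques (side := fun v => v \in P)).
  exact: zdiv_vertices_neq0 P_Ass Q_Ass neq_PQ.
move=> u v uV vV _.
exact: zdiv_vertices_mul_neq0 AssE neq_PQ capPQ uV vV.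
Qed.
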